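(* Let $R$ be a principal ideal domain, $M$ a faithful primeful $R$-module having at least one prime submodule, $X=\mathrm{Spec}(M)$, $N$ an $R$-module, $K\le M$, and $U=X\setminus V(K)$. Then there exists $a\in R$ such that $\mathcal{A}(N,M)(U)\cong N_a$.
   Context: For a submodule $L$ of an $R$-module $M$, $(L:M)=\{r\in R\mid rM\subseteq L\}$. A submodule $P$ of $M$ is prime if $P\neq M$ and whenever $rm\in P$ ($r\in R$, $m\in M$) then $r\in (P:M)$ or $m\in P$. $\mathrm{Spec}(M)$ is the set of prime submodules. $M$ is faithful if $\mathrm{Ann}_R(M)=0$; primeful if $M=0$ or $\mathrm{Spec}(M)\to\mathrm{Spec}(R/\mathrm{Ann}(M))$, $P\mapsto(P:M)/\mathrm{Ann}(M)$, is surjective. For $L\le M$, $V(L)=\{P\in X\mid (P:M)\supseteq (L:M)\}$; these are the closed sets of the Zariski topology. For open $U\subseteq X$, $\mathrm{Supp}(U)=\{(P:M)\mid P\in U\}$. $\mathcal{A}(N,M)(U)$ is the $R$-module of families $(\gamma_{\mathfrak p})_{\mathfrak p\in\mathrm{Supp}(U)}\in\prod_{\mathfrak p\in\mathrm{Supp}(U)}N_{\mathfrak p}$ such that for each $Q\in U$ there exist an open neighbourhood $W\subseteq U$ of $Q$ and $s\in R$, $m\in N$ with $s\notin(P:M)$ and $\gamma_{(P:M)}=m/s$ for every $P\in W$. $N_a$ denotes the localization of $N$ at the multiplicative set $\{a^n\mid n\ge0\}$. *)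

From HB Require Import structures.
From mathcomp Require Import all_boot all_order all_algebra.
Set Implicit Arguments. Unset Strict Implicit. Unset Printing Implicit Defensive.
Import GRing.Theory.
Local Open Scope ring_scope.

Section Defs.
Variable R : idomainType.

Definition is_ideal (I : R -> Prop) : Prop :=
  I 0 /\ (forall x y, I x -> I y -> I (x + y)) /\ (forall r x, I x -> I (r * x)).

Definition prime_ideal (p : R -> Prop) : Prop :=
  is_ideal p /\ ~ p 1 /\ (forall a b, p (a * b) -> p a \/ p b).

Definition PID : Prop :=
  forall I, is_ideal I -> exists a, forall x, I x <-> exists r, x = r * a.

Variable M : lmodType R.

Definition is_submodule (L : M -> Prop) : Prop :=
  L 0 /\ (forall x y, L x -> L y -> L (x + y)) /\ (forall r x, L x -> L (r *: x)).

Definition colon (L : M -> Prop) : R -> Prop := fun r => forall m, L (r *: m).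

Definition prime_submodule (P : M -> Prop) : Prop :=
  is_submodule P /\ (exists m, ~ P m) /\
  (forall r m, P (r *: m) -> colon P r \/ P m).

Definition Ann : R -> Prop := fun r => forall m : M, r *: m = 0.

Definition faithful : Prop := forall r, Ann r -> r = 0.

(** primeful: M = 0, or P |-> (P:M)/Ann(M) is onto Spec(R/Ann(M)).
    Prime ideals of R/Ann(M) are written out as the prime ideals p of R
    containing Ann(M) (via p |-> p/Ann(M)); (P:M)/Ann(M) = p/Ann(M) iff
    (P:M) = p since (P:M) ⊇ Ann(M). *)
Definition primeful : Prop :=
  (forall m : M, m = 0) \/
  (forall p, prime_ideal p -> (forall r, Ann r -> p r) ->
     exists P, prime_submodule P /\ colon P = p).

Definition V (L : M -> Prop) : (M -> Prop) -> Prop :=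
  fun P => prime_submodule P /\ (forall r, colon L r -> colon P r).

Definition zopen (W : (M -> Prop) -> Prop) : Prop :=
  exists L, is_submodule L /\
    forall P, W P <-> (prime_submodule P /\ ~ V L P).

Definition Supp (U : (M -> Prop) -> Prop) : (R -> Prop) -> Prop :=
  fun p => exists P, U P /\ colon P = p.

Variable N : lmodType R.

(** Localisation S^{-1} N at a multiplicative set S ⊆ R.
    An element of S^{-1}N is an equivalence class of pairs (m, s), s in S,
    represented as the set of its representatives. *)
Definition loc_equiv (S : R -> Prop) (x y : N * R) : Prop :=
  exists t, S t /\ t *: (y.2 *: x.1 - x.2 *: y.1) = 0.

Definition frac (S : R -> Prop) (m : N) (s : R) : N * R -> Prop :=
  fun x => S x.2 /\ loc_equiv S x (m, s).

Definition is_loc_elem (S : R -> Prop) (C : N * R -> Prop) : Prop :=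
  exists m s, S s /\ C = frac S m s.

Definition loc_add (S : R -> Prop) (C1 C2 : N * R -> Prop) : N * R -> Prop :=
  fun x => exists m1 s1 m2 s2, C1 (m1, s1) /\ C2 (m2, s2) /\
             frac S (s2 *: m1 + s1 *: m2) (s1 * s2) x.

Definition loc_scale (S : R -> Prop) (r : R) (C : N * R -> Prop) : N * R -> Prop :=
  fun x => exists m s, C (m, s) /\ frac S (r *: m) s x.

Definition compl (p : R -> Prop) : R -> Prop := fun r => ~ p r.
Definition powers (a : R) : R -> Prop := fun r => exists n : nat, r = a ^+ n.

(** Families (gamma_p)_{p in Supp U} in prod_{p in Supp U} N_p, encoded as
    functions on ideals, taking the value "empty" outside Supp U. *)
Definition family := (R -> Prop) -> (N * R -> Prop).

Definition in_product (U : (M -> Prop) -> Prop) (g : family) : Prop :=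
  forall p, (Supp U p -> is_loc_elem (compl p) (g p)) /\
            (~ Supp U p -> g p = (fun _ => False)).

Definition A_sections (U : (M -> Prop) -> Prop) (g : family) : Prop :=
  in_product U g /\
  forall Q, U Q -> exists W, zopen W /\ W Q /\ (forall P, W P -> U P) /\
    exists (s : R) (m : N), forall P, W P ->
      ~ colon P s /\ g (colon P) = frac (compl (colon P)) m s.

Definition fam_add (g1 g2 : family) : family :=
  fun p => loc_add (compl p) (g1 p) (g2 p).
Definition fam_scale (r : R) (g : family) : family :=
  fun p => loc_scale (compl p) r (g p).

Definition A_iso_loc (U : (M -> Prop) -> Prop) (a : R) : Prop :=
  exists phi : family -> (N * R -> Prop),
    (forall g, A_sections U g -> is_loc_elem (powers a) (phi g)) /\
    (forall g1 g2, A_sections U g1 -> A_sections U g2 -> phi g1 = phi g2 -> g1 = g2) /\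
    (forall C, is_loc_elem (powers a) C -> exists g, A_sections U g /\ phi g = C) /\
    (forall g1 g2, A_sections U g1 -> A_sections U g2 ->
        phi (fam_add g1 g2) = loc_add (powers a) (phi g1) (phi g2)) /\
    (forall r g, A_sections U g -> phi (fam_scale r g) = loc_scale (powers a) r (phi g)).

End Defs.

(* Since R is a PID, (K : M) = (b) for some b, so U consists of the prime submodules P
   with b notin (P : M); as M is faithful and primeful every prime ideal of R is some
   (P : M), hence Supp U is the basic open set D(b) of Spec R.  Sending m / b^n to the
   family of its images in the N_p, p in D(b), gives the isomorphism N_b = A(N,M)(U),
   as for the structure sheaf of an affine scheme: injectivity because an element
   killed locally on D(b) is killed by a power of b; surjectivity because a section is
   locally of the form a / f, finitely many such D(f) cover D(b) (a power of b lies in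
   the ideal generated by the f's), and after raising them to a common power the local
   fractions agree exactly and glue to a single fraction m / b^n.  The required
   radical property (e in every prime containing I implies e^n in I) is obtained from
   the ascending chain condition of a PID. *)

From Pilot Require Import Defs.
From mathcomp Require Import all_boot all_order all_algebra.
From mathcomp Require Import ring.
From Stdlib Require Import ClassicalEpsilon Classical FunctionalExtensionality PropExtensionality.
From Stdlib Require List.
(* re-imported so that [Defs.frac] shadows [fraction.frac] *)
Import Pilot.Defs.
Set Implicit Arguments. Unset Strict Implicit. Unset Printing Implicit Defensive.
Import GRing.Theory.
Local Open Scope ring_scope.

Definition multiplicative (R : idomainType) (S : R -> Prop) :=
  S 1 /\ forall x y, S x -> S y -> S (x * y).

Section Localization.
Variables (R : idomainType) (N : lmodType R).

Lemma loc_equivE (S : R -> Prop) (x y : N * R) :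
  loc_equiv S x y <-> exists2 t, S t & (t * y.2) *: x.1 = (t * x.2) *: y.1.
Proof.
rewrite /loc_equiv; split=> [[t [St H]] | [t St H]]; exists t => //.
- by apply/eqP; rewrite -subr_eq0 -!scalerA -scalerBr H.
- by split=> //; apply/eqP; rewrite scalerBr !scalerA subr_eq0 H.
Qed.

Lemma loc_equiv_sub (S T : R -> Prop) (x y : N * R) :
  (forall r, S r -> T r) -> loc_equiv S x y -> loc_equiv T x y.
Proof. by move=> ST [t [St H]]; exists t; split=> //; apply: ST. Qed.

Variable S : R -> Prop.
Hypothesis mulS : multiplicative S.

Lemma loc_equiv_refl (x : N * R) : loc_equiv S x x.
Proof. by apply/loc_equivE; exists 1; [exact: mulS.1 | rewrite mulrC]. Qed.

Lemma loc_equiv_sym (x y : N * R) : loc_equiv S x y -> loc_equiv S y x.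
Proof. by move/loc_equivE=> [t St H]; apply/loc_equivE; exists t. Qed.

Lemma loc_equiv_trans (x y z : N * R) : S y.2 ->
  loc_equiv S x y -> loc_equiv S y z -> loc_equiv S x z.
Proof.
move=> Sy /loc_equivE [t1 S1 H1] /loc_equivE [t2 S2 H2]; apply/loc_equivE.
exists (t1 * t2 * y.2); first by apply: mulS.2 => //; apply: mulS.2.
transitivity ((t2 * z.2) *: ((t1 * y.2) *: x.1)).
  by rewrite scalerA; congr (_ *: _); ring.
rewrite H1 scalerA.
transitivity ((t1 * x.2) *: ((t2 * z.2) *: y.1)).
  by rewrite scalerA; congr (_ *: _); ring.
by rewrite H2 scalerA; congr (_ *: _); ring.
Qed.

Lemma frac_self (m : N) s : S s -> frac S m s (m, s).
Proof. by move=> Ss; split=> //; apply: loc_equiv_refl. Qed.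

Lemma frac_eqE (m m' : N) s s' : S s -> S s' ->
  frac S m s = frac S m' s' <-> loc_equiv S (m, s) (m', s').
Proof.
move=> Ss Ss'; split; first by move=> E; have := frac_self m Ss; rewrite E => -[].
move=> E; apply: functional_extensionality => x.
apply: propositional_extensionality; split=> -[Sx Ex]; split=> //.
- exact: (loc_equiv_trans (y := (m, s)) Ss Ex E).
- exact: (loc_equiv_trans (y := (m', s')) Ss' Ex (loc_equiv_sym E)).
Qed.

Lemma loc_equiv_add (m1 m2 m1' m2' : N) s1 s2 s1' s2' :
  loc_equiv S (m1', s1') (m1, s1) -> loc_equiv S (m2', s2') (m2, s2) ->
  loc_equiv S (s2' *: m1' + s1' *: m2', s1' * s2') (s2 *: m1 + s1 *: m2, s1 * s2).
Proof.
move=> /loc_equivE [t1 S1 /= H1] /loc_equivE [t2 S2 /= H2]; apply/loc_equivE.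
exists (t1 * t2); first exact: mulS.2.
rewrite /= !scalerDr !scalerA.
have -> : (t1 * t2 * (s1 * s2) * s2') *: m1' = (t2 * s2 * s2') *: ((t1 * s1) *: m1').
  by rewrite scalerA; congr (_ *: _); ring.
have -> : (t1 * t2 * (s1 * s2) * s1') *: m2' = (t1 * s1 * s1') *: ((t2 * s2) *: m2').
  by rewrite scalerA; congr (_ *: _); ring.
by rewrite H1 H2 !scalerA; congr (_ *: _ + _ *: _); ring.
Qed.

Lemma loc_equiv_scale (r : R) (m m' : N) s s' :
  loc_equiv S (m', s') (m, s) -> loc_equiv S (r *: m', s') (r *: m, s).
Proof.
move=> /loc_equivE [t St /= H]; apply/loc_equivE; exists t => //=.
transitivity (r *: ((t * s) *: m')); first by rewrite !scalerA; congr (_ *: _); ring.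
by rewrite H !scalerA; congr (_ *: _); ring.
Qed.

Lemma loc_add_frac (m1 m2 : N) s1 s2 : S s1 -> S s2 ->
  loc_add S (frac S m1 s1) (frac S m2 s2) = frac S (s2 *: m1 + s1 *: m2) (s1 * s2).
Proof.
move=> S1 S2; apply: functional_extensionality => x.
apply: propositional_extensionality; split.
- move=> [m1' [s1' [m2' [s2' [[/= S1' E1] [[/= S2' E2] Fx]]]]]].
  by rewrite (proj2 (frac_eqE _ _ (mulS.2 _ _ S1' S2') (mulS.2 _ _ S1 S2))
                    (loc_equiv_add E1 E2)) in Fx.
- by move=> Fx; exists m1, s1, m2, s2; do !split=> //; exact: loc_equiv_refl.
Qed.

Lemma loc_scale_frac r (m : N) s : S s ->
  loc_scale S r (frac S m s) = frac S (r *: m) s.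
Proof.
move=> Ss; apply: functional_extensionality => x.
apply: propositional_extensionality; split.
- move=> [m' [s' [[/= Ss' E] Fx]]].
  by rewrite (proj2 (frac_eqE _ _ Ss' Ss) (loc_equiv_scale r E)) in Fx.
- by move=> Fx; exists m, s; split; first exact: frac_self.
Qed.

Lemma is_loc_elem_add (C1 C2 : N * R -> Prop) :
  is_loc_elem S C1 -> is_loc_elem S C2 -> is_loc_elem S (loc_add S C1 C2).
Proof.
move=> [m1 [s1 [S1 ->]]] [m2 [s2 [S2 ->]]]; rewrite loc_add_frac //.
by exists (s2 *: m1 + s1 *: m2), (s1 * s2); split=> //; apply: mulS.2.
Qed.

Lemma is_loc_elem_scale r (C : N * R -> Prop) :
  is_loc_elem S C -> is_loc_elem S (loc_scale S r C).
Proof. by move=> [m [s [Ss ->]]]; rewrite loc_scale_frac //; exists (r *: m), s. Qed.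

End Localization.

Definition loc_map (R : idomainType) (N : lmodType R) (T : R -> Prop) (C : N * R -> Prop) :=
  fun x => exists m s, C (m, s) /\ frac T m s x.

Lemma loc_map_frac (R : idomainType) (N : lmodType R) (S T : R -> Prop) (m : N) s :
  multiplicative T -> (forall r, S r -> T r) -> S s ->
  loc_map T (frac S m s) = frac T m s.
Proof.
move=> mT ST Ss; apply: functional_extensionality => x.
apply: propositional_extensionality; split.
- move=> [m' [s' [[/= Ss' E] Fx]]].
  by rewrite (proj2 (frac_eqE mT _ _ (ST _ Ss') (ST _ Ss)) (loc_equiv_sub ST E)) in Fx.
- by move=> Fx; exists m, s; do !split=> //; exists s; rewrite subrr scaler0.
Qed.

Section Ideals.
Variable R : idomainType.
Implicit Types (I J p : R -> Prop) (e r x y : R).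

Lemma ideal0 I : is_ideal I -> I 0.
Proof. by case. Qed.

Lemma idealD I x y : is_ideal I -> I x -> I y -> I (x + y).
Proof. by move=> [_ [h _]]; apply: h. Qed.

Lemma idealMl I r x : is_ideal I -> I x -> I (r * x).
Proof. by move=> [_ [_ h]]; apply: h. Qed.

Lemma idealMr I r x : is_ideal I -> I x -> I (x * r).
Proof. by move=> hI Ix; rewrite mulrC; apply: idealMl. Qed.

Lemma prime_notin_expr p e n : prime_ideal p -> ~ p e -> ~ p (e ^+ n).
Proof.
move=> [_ [p1 pM]] pe; elim: n => [|n IH]; first by rewrite expr0.
by rewrite exprS => /pM [].
Qed.

Lemma multiplicative_compl p : prime_ideal p -> multiplicative (compl p).
Proof. by move=> [_ [p1 pM]]; split=> // x y px py /pM []. Qed.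

Lemma multiplicative_powers e : multiplicative (powers e).
Proof.
split; first by exists 0%N; rewrite expr0.
by move=> x y [i ->] [j ->]; exists (i + j)%N; rewrite exprD.
Qed.

Lemma maximal_avoiding_powers_prime e J :
  is_ideal J -> (forall n, ~ J (e ^+ n)) ->
  (forall J', is_ideal J' -> (forall n, ~ J' (e ^+ n)) ->
     (forall x, J x -> J' x) -> forall x, J' x -> J x) ->
  prime_ideal J.
Proof.
move=> hJ eJ maxJ.
have meet x : ~ J x -> exists n j r, J j /\ e ^+ n = j + r * x.
  move=> Jx; apply: NNPP => nmeet; apply: Jx.
  pose Jx z := exists j r, J j /\ z = j + r * x.
  apply: (maxJ Jx); last by exists 0, 1; rewrite add0r mul1r; split=> //; exact: ideal0.
  - split; first by exists 0, 0; rewrite mul0r addr0; split=> //; exact: ideal0.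
    split=> [y z [j1 [r1 [J1 ->]]] [j2 [r2 [J2 ->]]] | c y [j1 [r1 [J1 ->]]]].
      by exists (j1 + j2), (r1 + r2); split; [exact: idealD | ring].
    by exists (c * j1), (c * r1); split; [exact: idealMl | ring].
  - by move=> n [j [r [Jj En]]]; apply: nmeet; exists n, j, r.
  - by move=> y Jy; exists y, 0; rewrite mul0r addr0.
split=> //; split; first by have := eJ 0%N; rewrite expr0.
move=> x y Jxy; apply: NNPP => /not_or_and [Jx Jy].
have [n [j1 [r [J1 E1]]]] := meet x Jx.
have [k [j2 [s [J2 E2]]]] := meet y Jy.
apply: (eJ (n + k)%N); rewrite exprD E1 E2.
have -> : (j1 + r * x) * (j2 + s * y) = (j2 + s * y) * j1 + (r * x) * j2 + (r * s) * (x * y).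
  by ring.
by apply: idealD => //; [apply: idealD => //; apply: idealMl | apply: idealMl].
Qed.

Hypothesis pid : PID R.

Lemma PID_ascending_chain (ch : nat -> R -> Prop) :
  (forall n, is_ideal (ch n)) -> (forall n x, ch n x -> ch n.+1 x) ->
  exists k, forall x, ch k.+1 x -> ch k x.
Proof.
move=> hch incr.
have mono n m x : (n <= m)%N -> ch n x -> ch m x.
  elim: m => [|m IH]; first by rewrite leqn0 => /eqP ->.
  by rewrite leq_eqVlt => /orP [/eqP -> // | /IH chm /chm]; apply: incr.
pose Un x := exists n, ch n x.
have hUn : is_ideal Un.
  split; first by exists 0%N; exact: ideal0.
  split=> [x y [i xi] [j yj] | r x [i xi]]; last by exists i; exact: idealMl.
  exists (maxn i j); apply: idealD => //.
    by apply: mono xi; apply: leq_maxl.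
  by apply: mono yj; apply: leq_maxr.
have [d hd] := pid hUn.
have [k dk] : Un d by apply/hd; exists 1; rewrite mul1r.
exists k => x chx; have /hd [r ->] : Un x by exists k.+1.
exact: idealMl.
Qed.

Lemma PID_exists_maximal (good : (R -> Prop) -> Prop) I :
  (forall J, good J -> is_ideal J) -> good I ->
  exists2 J, good J & forall J', good J' -> (forall x, J x -> J' x) -> forall x, J' x -> J x.
Proof.
move=> good_ideal gI; apply: NNPP => nomax.
have step J : good J -> exists J', good J' /\ (forall x, J x -> J' x) /\ exists x, J' x /\ ~ J x.
  move=> gJ; apply: NNPP => nstep; apply: nomax; exists J => // J' gJ' JJ' x J'x.
  by apply: NNPP => Jx; apply: nstep; exists J'; do !split=> //; exists x.
pose next J := epsilon (inhabits I)
  (fun J' => good J' /\ (forall x, J x -> J' x) /\ exists x, J' x /\ ~ J x).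
pose ch := fix ch n := if n is k.+1 then next (ch k) else I.
have good_ch n : good (ch n).
  by elim: n => [|n IH] //; exact: (epsilon_spec _ _ (step _ IH)).1.
have next_spec n := epsilon_spec (inhabits I) _ (step _ (good_ch n)).
have [k stable] := PID_ascending_chain (fun n => good_ideal _ (good_ch n))
  (fun n => (next_spec n).2.1).
have [_ [_ [x [/stable chkx nchkx]]]] := next_spec k.
exact: nchkx chkx.
Qed.

Lemma PID_radical I e : is_ideal I ->
  (forall p, prime_ideal p -> (forall x, I x -> p x) -> p e) -> exists n, I (e ^+ n).
Proof.
move=> hI primeI; apply: NNPP => /(not_ex_all_not _ _) Ie.
pose good J := [/\ is_ideal J, forall x, I x -> J x & forall n, ~ J (e ^+ n)].
have [J [hJ IJ eJ] maxJ] : exists2 J, good J & forall J', good J' ->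
    (forall x, J x -> J' x) -> forall x, J' x -> J x.
  by apply: (PID_exists_maximal (I := I)) => [J [] | ].
have pJ : prime_ideal J.
  apply: maximal_avoiding_powers_prime => // J' hJ' eJ' JJ'.
  by apply: maxJ => //; split=> // x /IJ /JJ'.
by apply: (eJ 1%N); rewrite expr1; apply: primeI.
Qed.

Lemma principal_ideal s : is_ideal (fun x => exists r, x = r * s).
Proof.
split; first by exists 0; rewrite mul0r.
split=> [x y [r1 ->] [r2 ->] | r x [r1 ->]]; first by exists (r1 + r2); rewrite mulrDl.
by exists (r * r1); rewrite mulrA.
Qed.

Lemma PID_annihilated_by_pow (N : lmodType R) e (x : N) :
  (forall p, prime_ideal p -> ~ p e -> exists2 t, ~ p t & t *: x = 0) ->
  exists n, e ^+ n *: x = 0.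
Proof.
move=> local.
have hI : is_ideal (fun r : R => r *: x = 0).
  split; first by rewrite scale0r.
  split=> [a c ha hc | r a ha]; first by rewrite scalerDl ha hc addr0.
  by rewrite -scalerA ha scaler0.
apply: PID_radical hI _ => p pp ann; apply: NNPP => pe.
by have [t pt tx] := local p pp pe; apply: pt; apply: ann.
Qed.

End Ideals.

Lemma list_uniform_bound (T : Type) (Q : T -> nat -> Prop) (l : seq T) :
  (forall x k k', Q x k -> (k <= k')%N -> Q x k') ->
  (forall x, List.In x l -> exists k, Q x k) -> exists k, forall x, List.In x l -> Q x k.
Proof.
move=> Qmono; elim: l => [|y l IH] Ql; first by exists 0%N.
have [k Qk] := Ql y (or_introl erefl).
have [K QK] := IH (fun x lx => Ql x (or_intror lx)).
exists (maxn k K) => x [<- | lx]; first exact: Qmono Qk (leq_maxl _ _).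
exact: Qmono (QK x lx) (leq_maxr _ _).
Qed.

Section IdealSpan.
Variables (R : idomainType) (I : Type) (D : I -> Prop) (f : I -> R).

Definition ideal_span (x : R) : Prop :=
  exists l : seq (R * I), (forall z, List.In z l -> D z.2) /\ x = \sum_(z <- l) z.1 * f z.2.

Lemma ideal_span_ideal : is_ideal ideal_span.
Proof.
split; first by exists [::]; rewrite big_nil.
split=> [x y [l1 [D1 ->]] [l2 [D2 ->]] | r x [l [Dl ->]]].
  exists (l1 ++ l2); rewrite big_cat; split=> // z /(List.in_app_or l1 l2 z) [/D1 | /D2] //.
exists (map (fun z => (r * z.1, z.2)) l); split.
  by move=> z /List.in_map_iff [y [<- /Dl]].
by rewrite big_map mulr_sumr; apply: eq_bigr => z _; rewrite mulrA.
Qed.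

Lemma ideal_span_mem i : D i -> ideal_span (f i).
Proof. by move=> Di; exists [:: (1, i)]; rewrite big_seq1 mul1r; split=> // z [<-|]. Qed.

Lemma prime_notin_sum p (l : seq (R * I)) : prime_ideal p ->
  ~ p (\sum_(z <- l) z.1 * f z.2) -> exists z, List.In z l /\ ~ p (f z.2).
Proof.
move=> [hp _]; elim: l => [|y l IH]; first by rewrite big_nil => /(_ (ideal0 hp)).
rewrite big_cons => nsum; case: (classic (p (f y.2))) => [py | npy].
  have [|z [lz pz]] := IH; last by exists z; split; [right|].
  by move=> psum; apply: nsum; apply: idealD => //; apply: idealMl.
by exists y; split; [left|].
Qed.

Lemma glue_fractions (N : lmodType R) (a : I -> N) (l : seq (R * I)) j :
  (forall i i', D i -> D i' -> f i' *: a i = f i *: a i') ->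
  (forall z, List.In z l -> D z.2) -> D j ->
  f j *: \sum_(z <- l) z.1 *: a z.2 = (\sum_(z <- l) z.1 * f z.2) *: a j.
Proof.
move=> compat; elim: l => [|z l IH] Dl Dj; first by rewrite !big_nil scaler0 scale0r.
rewrite !big_cons scalerDr scalerDl IH //; last by move=> y ly; apply: Dl; right.
by rewrite scalerA mulrC -scalerA compat // ?scalerA //; apply: Dl; left.
Qed.

End IdealSpan.

Lemma pow_compat_fractions (R : comNzRingType) (N : lmodType R) (f f' : R) (a a' : N) k :
  (f * f') ^+ k *: (f' *: a - f *: a') = 0 ->
  f' ^+ k.+1 *: (f ^+ k *: a) = f ^+ k.+1 *: (f' ^+ k *: a').
Proof.
rewrite scalerBr => /eqP; rewrite subr_eq0 => /eqP H; rewrite !scalerA.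
transitivity ((f * f') ^+ k *: (f' *: a)).
  by rewrite scalerA exprMn !exprSr; congr (_ *: _); ring.
by rewrite H scalerA exprMn !exprSr; congr (_ *: _); ring.
Qed.

Lemma PID_quasi_compact (R : idomainType) (I : Type) (D : I -> Prop) (f : I -> R) e :
  PID R -> (forall p, prime_ideal p -> ~ p e -> exists2 i, D i & ~ p (f i)) ->
  exists n (l : seq (R * I)), [/\ forall z, List.In z l -> D z.2,
    e ^+ n = \sum_(z <- l) z.1 * f z.2 &
    forall p, prime_ideal p -> ~ p e -> exists z, List.In z l /\ ~ p (f z.2)].
Proof.
move=> pid cover.
have [n [l [Dl El]]] : exists n, ideal_span D f (e ^+ n).
  apply: (PID_radical pid (ideal_span_ideal D f) (e := e)) => p pp span_p; apply: NNPP => pe.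
  by have [i Di pi] := cover p pp pe; apply: pi; apply: span_p; apply: ideal_span_mem.
exists n, l; split=> // p pp pe; apply: (prime_notin_sum (f := f) pp).
by rewrite -El; apply: prime_notin_expr.
Qed.

Lemma PID_frac_eq (R : idomainType) (N : lmodType R) (e f f' : R) (a a' : N) : PID R ->
  (forall q, prime_ideal q -> ~ q e ->
     [/\ ~ q f, ~ q f' & frac (compl q) a f = frac (compl q) a' f']) ->
  exists k, e ^+ k *: (f' *: a - f *: a') = 0.
Proof.
move=> pid agree; apply: PID_annihilated_by_pow => // q qq qe.
have [qf qf' E] := agree q qq qe.
have /loc_equivE [t qt Et] := (frac_eqE (multiplicative_compl qq) _ _ qf qf').1 E.
by exists t => //; apply/eqP; rewrite scalerBr !scalerA subr_eq0 Et.
Qed.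

Section ColonIdeals.
Variables (R : idomainType) (M : lmodType R).

Lemma colon_ideal (L : M -> Prop) : is_submodule L -> is_ideal (colon L).
Proof.
move=> [L0 [LD LZ]]; split; first by move=> m; rewrite scale0r.
split=> [x y hx hy m | r x hx m]; first by rewrite scalerDl; apply: LD.
by rewrite -scalerA; apply: LZ.
Qed.

Lemma colon_prime (P : M -> Prop) : prime_submodule P -> prime_ideal (colon P).
Proof.
move=> [hP [[m0 Pm0] Pprime]]; split; first exact: colon_ideal.
split; first by move=> P1; apply: Pm0; have := P1 m0; rewrite scale1r.
move=> x y Pxy; case: (classic (colon P y)) => Py; first by right.
left; have [m Pym] : exists m, ~ P (y *: m).
  by apply: NNPP => H; apply: Py => m; apply: NNPP => H2; apply: H; exists m.
by case: (Pprime x (y *: m)) => //; rewrite scalerA; apply: Pxy.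
Qed.

Lemma V_principal (L P : M -> Prop) c :
  (forall r, colon L r <-> exists c', r = c' * c) -> prime_submodule P ->
  V L P <-> colon P c.
Proof.
move=> Lc hP; split=> [[_ LP] | Pc]; first by apply: LP; apply/Lc; exists 1; rewrite mul1r.
by split=> // r /Lc [c' ->]; exact: idealMl (colon_ideal hP.1) Pc.
Qed.

Lemma faithful_primeful_colon_surj (p : R -> Prop) : faithful M -> primeful M ->
  prime_ideal p -> exists P : M -> Prop, prime_submodule P /\ colon P = p.
Proof.
move=> faith [M0 | onto] pp; last first.
  by apply: onto => // r /faith ->; exact: ideal0 pp.1.
have /eqP : (1 : R) = 0 by apply: faith => m; exact: M0.
by rewrite oner_eq0.
Qed.

End ColonIdeals.

Section LocFamily.
Variables (R : idomainType) (N : lmodType R) (b : R).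

Definition loc_family (C : N * R -> Prop) : family N :=
  fun p x => (prime_ideal p /\ ~ p b) /\ loc_map (compl p) C x.

Lemma loc_family_out C p : ~ (prime_ideal p /\ ~ p b) -> loc_family C p = fun _ => False.
Proof.
move=> pb; apply: functional_extensionality => x; apply: propositional_extensionality.
by split=> [[]|].
Qed.

Lemma loc_family_frac (m : N) n p : prime_ideal p -> ~ p b ->
  loc_family (frac (powers b) m (b ^+ n)) p = frac (compl p) m (b ^+ n).
Proof.
move=> pp pb.
rewrite -(@loc_map_frac _ _ (powers b) _ _ _ (multiplicative_compl pp)); last by exists n.
  apply: functional_extensionality => x; apply: propositional_extensionality.
  by split=> [[]|].
by move=> r [k ->]; apply: prime_notin_expr.
Qed.

Lemma loc_family_add (C1 C2 : N * R -> Prop) :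
  is_loc_elem (powers b) C1 -> is_loc_elem (powers b) C2 ->
  loc_family (loc_add (powers b) C1 C2) = fam_add (loc_family C1) (loc_family C2).
Proof.
move=> [m1 [s1 [[n1 ->] ->]]] [m2 [s2 [[n2 ->] ->]]].
rewrite loc_add_frac; [|exact: multiplicative_powers|by exists n1|by exists n2].
apply: functional_extensionality => p; rewrite /fam_add -exprD.
case: (classic (prime_ideal p /\ ~ p b)) => [[pp pb] | pb].
  rewrite !loc_family_frac // loc_add_frac ?exprD //;
    by [apply: multiplicative_compl | apply: prime_notin_expr].
rewrite !loc_family_out //; apply: functional_extensionality => x.
by apply: propositional_extensionality; split=> // -[? [? [? [? []]]]].
Qed.

Lemma loc_family_scale r (C : N * R -> Prop) : is_loc_elem (powers b) C ->
  loc_family (loc_scale (powers b) r C) = fam_scale r (loc_family C).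
Proof.
move=> [m [s [[n ->] ->]]].
rewrite loc_scale_frac; [|exact: multiplicative_powers|by exists n].
apply: functional_extensionality => p; rewrite /fam_scale.
case: (classic (prime_ideal p /\ ~ p b)) => [[pp pb] | pb].
  rewrite !loc_family_frac // loc_scale_frac //;
    by [apply: multiplicative_compl | apply: prime_notin_expr].
rewrite !loc_family_out //; apply: functional_extensionality => x.
by apply: propositional_extensionality; split=> // -[? [? []]].
Qed.

Lemma loc_family_inj (C1 C2 : N * R -> Prop) : PID R ->
  is_loc_elem (powers b) C1 -> is_loc_elem (powers b) C2 ->
  loc_family C1 = loc_family C2 -> C1 = C2.
Proof.
move=> pid [m1 [s1 [[n1 ->] ->]]] [m2 [s2 [[n2 ->] ->]]] E.
have pow n : powers b (b ^+ n) by exists n.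
apply/(frac_eqE (multiplicative_powers b) _ _ (pow n1) (pow n2)).
have [k bk] : exists k, b ^+ k *: (b ^+ n2 *: m1 - b ^+ n1 *: m2) = 0.
  apply: PID_frac_eq => // q qq qb; split; try exact: prime_notin_expr.
  by have := f_equal (fun g => g q) E; rewrite /= !loc_family_frac.
by exists (b ^+ k); split; first exists k.
Qed.

End LocFamily.

Section SectionsOverBasicOpen.
Variables (R : idomainType) (M N : lmodType R) (K : M -> Prop) (b : R).
Hypotheses (pid : PID R) (faith : faithful M) (prf : primeful M) (hK : is_submodule K).
Hypothesis Kb : forall r, colon K r <-> exists c, r = c * b.

Let U P := prime_submodule P /\ ~ V K P.

Lemma U_colon P : U P <-> prime_submodule P /\ ~ colon P b.
Proof. by split=> -[hP nV]; split=> //; move: nV; rewrite (V_principal Kb hP). Qed.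

Lemma Supp_U p : Supp U p <-> prime_ideal p /\ ~ p b.
Proof.
split=> [[P [/U_colon [hP Pb] <-]] | [pp pb]]; first by split=> //; exact: colon_prime.
have [P [hP Pp]] := faithful_primeful_colon_surj faith prf pp.
by exists P; split=> //; apply/U_colon; rewrite Pp.
Qed.

Lemma loc_family_sections (C : N * R -> Prop) :
  is_loc_elem (powers b) C -> A_sections U (loc_family b C).
Proof.
move=> [m [s [[n ->] ->]]]; split.
  move=> p; split=> [/Supp_U [pp pb] | nS].
    rewrite loc_family_frac //; exists m, (b ^+ n); split=> //.
    exact: prime_notin_expr.
  by apply: loc_family_out => /Supp_U.
move=> Q UQ; exists U; split; first by exists K.
do 2!split=> //; exists (b ^+ n), m => P /U_colon [hP Pb].
split; first exact: prime_notin_expr (colon_prime hP) Pb.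
by rewrite loc_family_frac //; exact: colon_prime.
Qed.

Lemma section_local_data (g : family N) p : A_sections U g -> prime_ideal p -> ~ p b ->
  exists c s (m : N), ~ p c /\ forall q, prime_ideal q -> ~ q c ->
     [/\ ~ q b, ~ q s & g q = frac (compl q) m s].
Proof.
move=> [_ glocal] pp pb.
have [P [hP Pp]] := faithful_primeful_colon_surj faith prf pp.
have UP : U P by apply/U_colon; rewrite Pp.
have [W [[L [hL hW]] [WP [WU [s [m gW]]]]]] := glocal P UP.
have [c Lc] := pid (colon_ideal hL).
exists c, s, m; split=> [|q qq qc].
  by move: WP => /hW [_]; rewrite (V_principal Lc hP) Pp.
have [Q [hQ Qq]] := faithful_primeful_colon_surj faith prf qq.
have WQ : W Q by apply/hW; split; rewrite // (V_principal Lc hQ) Qq.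
have [_ Qb] := (U_colon Q).1 (WU Q WQ).
by have [Qs gQ] := gW Q WQ; rewrite -Qq.
Qed.

Definition is_frac_on (g : family N) (f : R) (a : N) : Prop :=
  forall q, prime_ideal q -> ~ q f -> ~ q b /\ g q = frac (compl q) a f.

Lemma section_local_frac (g : family N) p : A_sections U g -> prime_ideal p -> ~ p b ->
  exists2 fa : R * N, ~ p fa.1 & is_frac_on g fa.1 fa.2.
Proof.
move=> hg pp pb; have [c [s [m [pc gc]]]] := section_local_data hg pp pb.
have [n [r Er]] : exists n r, c ^+ n = r * s.
  apply: (PID_radical pid (principal_ideal s)) => q qq sq; apply: NNPP => qc.
  by have [_ qs _] := gc q qq qc; apply: qs; apply: sq; exists 1; rewrite mul1r.
(* [m / s = (r c m) / c ^ (n + 1)] since [c ^ n = r s] *)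
exists (c ^+ n.+1, (r * c) *: m); first exact: prime_notin_expr pp pc.
move=> q qq /= qcn.
have qc : ~ q c by move=> qc; apply: qcn; rewrite exprSr; exact: idealMl qq.1 qc.
have [qb qs ->] := gc q qq qc; split=> //.
apply/(frac_eqE (multiplicative_compl qq)) => //; apply/loc_equivE.
exists 1; first exact: qq.2.1.
by rewrite /= scalerA exprSr Er; congr (_ *: _); ring.
Qed.

Lemma is_frac_on_agree (g : family N) f f' (a a' : N) :
  is_frac_on g f a -> is_frac_on g f' a' ->
  exists k, (f * f') ^+ k *: (f' *: a - f *: a') = 0.
Proof.
move=> ga ga'; apply: PID_frac_eq => // q qq qff.
have [qf qf'] : ~ q f /\ ~ q f'.
  by split=> qf; apply: qff; [exact: idealMr qq.1 qf | exact: idealMl qq.1 qf].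
by split=> //; rewrite -(ga q qq qf).2 (ga' q qq qf').2.
Qed.

Lemma is_frac_on_uniform_agree (g : family N) (I : Type) (f : I -> R) (a : I -> N)
    (l : seq (R * I)) :
  (forall z, List.In z l -> is_frac_on g (f z.2) (a z.2)) ->
  exists k, forall z z', List.In z l -> List.In z' l ->
    (f z.2 * f z'.2) ^+ k *: (f z'.2 *: a z.2 - f z.2 *: a z'.2) = 0.
Proof.
move=> gl.
pose Q (zz : (R * I) * (R * I)) k :=
  (f zz.1.2 * f zz.2.2) ^+ k *: (f zz.2.2 *: a zz.1.2 - f zz.1.2 *: a zz.2.2) = 0.
have [k Hk] : exists k, forall zz, List.In zz (List.list_prod l l) -> Q zz k.
  apply: list_uniform_bound.
    by move=> zz k k' Hzz /subnK <-; rewrite /Q exprD -scalerA Hzz scaler0.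
  by move=> [z z'] /List.in_prod_iff [lz lz']; apply: is_frac_on_agree; apply: gl.
by exists k => z z' lz lz'; apply: (Hk (z, z')); apply/List.in_prod_iff.
Qed.

Lemma sections_loc_family (g : family N) : A_sections U g ->
  exists2 C, is_loc_elem (powers b) C & loc_family b C = g.
Proof.
move=> hg.
pose Db p := prime_ideal p /\ ~ p b.
pose good p (fa : R * N) := ~ p fa.1 /\ is_frac_on g fa.1 fa.2.
pose fa p := epsilon (inhabits ((0 : R), (0 : N))) (good p).
have fa_good p : Db p -> good p (fa p).
  move=> [pp pb]; apply: epsilon_spec.
  by have [x] := section_local_frac hg pp pb; exists x.
pose f p := (fa p).1; pose a p := (fa p).2.
have cover p : prime_ideal p -> ~ p b -> exists2 i, Db i & ~ p (f i).
  by move=> pp pb; exists p; last exact: (fa_good p _).1.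
have [n1 [l1 [Dl1 _ cover1]]] := PID_quasi_compact pid cover.
have [k agree] := is_frac_on_uniform_agree (f := f) (a := a)
  (fun z lz => (fa_good _ (Dl1 z lz)).2).
(* multiplying numerator and denominator by [f ^ k] makes the local fractions agree exactly *)
pose f' p := f p ^+ k.+1; pose a' p := f p ^+ k *: a p.
pose D' p := exists2 z, List.In z l1 & p = z.2.
have compat i i' : D' i -> D' i' -> f' i' *: a' i = f' i *: a' i'.
  by move=> [z lz ->] [z' lz' ->]; apply: pow_compat_fractions; apply: agree.
have cover' p : prime_ideal p -> ~ p b -> exists2 i, D' i & ~ p (f' i).
  move=> pp pb; have [z [lz pz]] := cover1 p pp pb.
  by exists z.2; [exists z | exact: prime_notin_expr].
have [n2 [l2 [Dl2 E2 _]]] := PID_quasi_compact pid cover'.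
exists (frac (powers b) (\sum_(z <- l2) z.1 *: a' z.2) (b ^+ n2)).
  by exists (\sum_(z <- l2) z.1 *: a' z.2), (b ^+ n2); split=> //; exists n2.
apply: functional_extensionality => p.
case: (classic (Db p)) => [[pp pb] | npb]; last first.
  by rewrite loc_family_out //; symmetry; apply: (hg.1 p).2 => /Supp_U.
have [z [lz pz]] := cover1 p pp pb.
have [_ gz] := fa_good _ (Dl1 _ lz).
rewrite loc_family_frac // (gz p pp pz).2.
apply/(frac_eqE (multiplicative_compl pp)); [exact: prime_notin_expr | exact: pz |].
apply/loc_equivE; exists (f z.2 ^+ k); first exact: prime_notin_expr.
rewrite /= -exprSr -scalerA (glue_fractions compat) //; last by exists z.
by rewrite -E2 /a' !scalerA mulrC.
Qed.

End SectionsOverBasicOpen.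

Lemma A_iso_loc_of_bijection (R : idomainType) (M N : lmodType R)
    (U : (M -> Prop) -> Prop) (a : R) (psi : (N * R -> Prop) -> family N) :
  (forall C, is_loc_elem (powers a) C -> A_sections U (psi C)) ->
  (forall C1 C2, is_loc_elem (powers a) C1 -> is_loc_elem (powers a) C2 ->
     psi C1 = psi C2 -> C1 = C2) ->
  (forall g, A_sections U g -> exists2 C, is_loc_elem (powers a) C & psi C = g) ->
  (forall C1 C2, is_loc_elem (powers a) C1 -> is_loc_elem (powers a) C2 ->
     psi (loc_add (powers a) C1 C2) = fam_add (psi C1) (psi C2)) ->
  (forall r C, is_loc_elem (powers a) C ->
     psi (loc_scale (powers a) r C) = fam_scale r (psi C)) ->
  A_iso_loc N U a.
Proof.
move=> psi_sec psi_inj psi_surj psi_add psi_scale.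
pose phi g := epsilon (inhabits (fun _ : N * R => False))
  (fun C => is_loc_elem (powers a) C /\ psi C = g).
have phiK g : A_sections U g -> is_loc_elem (powers a) (phi g) /\ psi (phi g) = g.
  move=> /psi_surj [C hC psiC].
  by apply: (epsilon_spec _ (fun C => is_loc_elem (powers a) C /\ psi C = g)); exists C.
have psiK C : is_loc_elem (powers a) C -> phi (psi C) = C.
  by move=> hC; have [hphi] := phiK _ (psi_sec C hC); apply: psi_inj.
have mul_powers := multiplicative_powers a.
exists phi; split; [|split; [|split; [|split]]].
- by move=> g /phiK [].
- by move=> g1 g2 /phiK [_ e1] /phiK [_ e2] E; rewrite -e1 -e2 E.
- by move=> C hC; exists (psi C); split; [exact: psi_sec | exact: psiK].
- move=> g1 g2 /phiK [h1 e1] /phiK [h2 e2].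
  by rewrite -{1}e1 -{1}e2 -psi_add // psiK //; exact: is_loc_elem_add.
- move=> r g /phiK [h e].
  by rewrite -{1}e -psi_scale // psiK //; exact: is_loc_elem_scale.
Qed.

Theorem corollary3p17 (R : idomainType) (M N : lmodType R) (K : M -> Prop) :
  PID R -> faithful M -> primeful M -> (exists P : M -> Prop, prime_submodule P) ->
  is_submodule K ->
  exists a : R,
    @A_iso_loc R M N (fun P : M -> Prop => prime_submodule P /\ ~ V K P) a.
Proof.
move=> pid faith prf _ hK.
have [b Kb] := pid _ (colon_ideal hK).
exists b; apply: (A_iso_loc_of_bijection (psi := loc_family b)).
- exact: loc_family_sections.
- by move=> C1 C2; apply: loc_family_inj.
- exact: sections_loc_family.
- exact: loc_family_add.
- exact: loc_family_scale.
Qed.
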